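(* Let $Y$ be a second countable locally compact connected Abelian group with character group $X$. Let $h$ be a real-valued characteristic function on $Y$ satisfying $h(2y)=2h^2(y)-1$ for all $y\in Y$. Then there is $x_0\in X$ such that $h(y)=\operatorname{Re}\,(x_0,y)$ for all $y\in Y$.
   Context: A function $h$ on $Y$ is a characteristic function if there is a probability distribution $\mu$ on $X$ with $h(y)=\int_X (x,y)\,d\mu(x)$ for all $y\in Y$, where $(x,y)$ is the value of the character $y$ at $x$ (equivalently of $x$ at $y$ under Pontryagin duality). *)

From HB Require Import structures.
From mathcomp Require Import all_boot all_order all_algebra.
From mathcomp Require Import all_classical all_reals all_analysis.
From mathcomp Require Import complex.
Set Implicit Arguments. Unset Strict Implicit. Unset Printing Implicit Defensive.
Import Order.TTheory GRing.Theory Num.Theory.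
Import numFieldTopology.Exports numFieldNormedType.Exports.
Local Open Scope classical_set_scope.
Local Open Scope ring_scope.

(* The complex numbers R[i] with their usual (norm) topology: we copy the
   canonical pseudometric structure that MathComp-Analysis gives to any
   numClosedFieldType (here complex R), so that it is found on R[i]. *)
#[non_forgetful_inheritance]
HB.instance Definition _ (R : rcfType) :=
  PseudoPointedMetric.copy (R[i]) (R[i] : numClosedFieldType)^o.

Definition is_character (R : realType) (Y : topologicalZmodType)
    (f : Y -> R[i]) : Prop :=
  [/\ continuous f,
      (forall a b : Y, f (a + b) = f a * f b) &
      (forall y : Y, `|f y| = 1)].

Definition char_group (R : realType) (Y : topologicalZmodType) : Type :=
  set_type (@is_character R Y : set {compact-open, Y -> R[i]}).

Section char_group_instances.
Context (R : realType) (Y : topologicalZmodType).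

HB.instance Definition _ := Topological.on (char_group R Y).

(* The trivial character y |-> 1, used to make X a pointed type (needed to
   build the Borel sigma-algebra in MathComp-Analysis). *)
Lemma trivial_is_character :
  @is_character R Y (fun _ => 1).
Proof.
split; [move=> y; exact: cvg_cst | by move=> a b; rewrite mulr1 |
  by move=> y; rewrite normr1].
Qed.

Definition trivial_character : char_group R Y :=
  exist _ ((fun _ => 1) : {compact-open, Y -> R[i]}) (mem_set trivial_is_character).

HB.instance Definition _ := isPointed.Build (char_group R Y) trivial_character.

End char_group_instances.

Definition char_val (R : realType) (Y : topologicalZmodType)
    (x : char_group R Y) (y : Y) : R[i] := (set_val x : Y -> R[i]) y.


(* h : Y -> R is a (real-valued) characteristic function: there is a
   probability (Borel) measure mu on X with h y = \int_X (x, y) dmu(x);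
   the complex integral is split into its real and imaginary parts. *)
Definition is_real_char_fun (R : realType) (Y : topologicalZmodType)
    (h : Y -> R) : Prop :=
  exists mu : probability (g_sigma_algebraType (@open (char_group R Y))) R,
    forall y : Y,
      (\int[mu]_x (complex.Re (@char_val R Y x y))%:E = (h y)%:E)%E /\
      (\int[mu]_x (complex.Im (@char_val R Y x y))%:E = 0)%E.

From HB Require Import structures.
From mathcomp Require Import all_boot all_order all_algebra.
From mathcomp Require Import all_classical all_reals all_analysis.
From mathcomp Require Import complex.
From mathcomp Require Import measurable_realfun.
From mathcomp Require Import ring lra.
Import Order.TTheory GRing.Theory Num.Theory.
Import numFieldTopology.Exports numFieldNormedType.Exports.
Local Open Scope classical_set_scope.
Local Open Scope ring_scope.

(* Fix y and view f(x) = Re (x, y) as a random variable on (X, mu): its mean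
   is h(y), and since (x, 2y) = (x, y)^2 with |(x, y)| = 1 we have
   f^2 = (Re (x, 2y) + 1) / 2, so the duplication law gives E[f^2] = h(y)^2.
   The variance vanishes, hence Re (x, y) = h(y) for mu-almost every x.
   A second countable Y has a countable dense set D; countably many
   almost-sure events hold simultaneously, so some character x0 satisfies
   Re (x0, .) = h on D.  For any y, some character x1 satisfies Re (x1, .) = h
   on D and at y, and the continuous functions Re (x0, .) and Re (x1, .) agree
   on the dense set D, so h(y) = Re (x1, y) = Re (x0, y). *)

Lemma ler_norm_Re {R : rcfType} (z : R[i]) : `|complex.Re z| <= complex.Re `|z|.
Proof. by have := normc_ge_Re z; rewrite lecE => /andP[]. Qed.

Lemma Re_sqr_unit {R : rcfType} (z : R[i]) :
  `|z| = 1 -> complex.Re (z ^+ 2) = 2 * complex.Re z ^+ 2 - 1.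
Proof.
move=> z1; have := add_Re2_Im2 z; rewrite z1 expr1n => -[].
case: z {z1} => a b /= ab1; rewrite -[b * b]expr2.
have -> : b ^+ 2 = 1 - a ^+ 2 by rewrite -ab1; ring.
by rewrite expr2; ring.
Qed.

Lemma continuous_Re (R : realType) : continuous (@complex.Re R : R[i] -> R).
Proof.
move=> z; apply/(@cvgrPdist_lt _ _ _ _ (nbhs_filter z)) => e e0.
exists e%:C%C; first by rewrite /= ltcR.
move=> w /=; rewrite ltcE -raddfB => /andP[_].
exact: le_lt_trans (ler_norm_Re _).
Qed.

Lemma continuous_compact_open_eval {T U : topologicalType} (t : T) :
  continuous (fun f : {compact-open, T -> U} => f t).
Proof.
apply/continuousP => W oW.
have -> : (fun f : {compact-open, T -> U} => f t) @^-1` W =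
    [set f | f @` [set t] `<=` W].
  by apply/seteqP; split => f; rewrite /= image_set1 sub1set inE.
exact: compact_open_open (@compact_set1 _ t) oW.
Qed.

Lemma second_countable_dense {T : topologicalType} :
  @second_countable T -> exists2 D : set T, countable D & dense D.
Proof.
case=> B cB [_ B_nbhs].
have [[t0 _]|T0] := pselect (exists t : T, True); last first.
  by exists set0 => // O [t]; exfalso; apply: T0; exists t.
exists (xget t0 @` B); first exact: sub_countable (card_image_le _ _) cB.
move=> O [t Ot] oO.
have [U [BU Ut] UO] := B_nbhs t O (open_nbhs_nbhs (conj oO Ot)).
by exists (xget t0 U); split; [apply: UO; exact: xgetI Ut | exists U].
Qed.

Lemma continuous_eq_dense {T : topologicalType} {R : realFieldType}
    {D : set T} {f g : T -> R} :
  dense D -> continuous f -> continuous g ->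
  (forall t, D t -> f t = g t) -> f =1 g.
Proof.
move=> dD cf cg fg t; apply: contrapT => fgt.
have cfg : continuous (f - g) by move=> s; exact: (continuousB (cf s) (cg s)).
have oN : open ((f - g) @^-1` ~` [set 0]).
  exact: (continuousP _).1 cfg _ (closed_openC (@closed_eq _ 0)).
have [s [/= fgs Ds]] : ((f - g) @^-1` ~` [set 0]) `&` D !=set0.
  by apply: dD oN; exists t => /subr0_eq.
by apply: fgs; apply/eqP; rewrite subr_eq0 fg.
Qed.

Lemma continuous_borel_measurable {T : ptopologicalType} {R : realType}
    {f : T -> R} :
  continuous f -> measurable_fun [set: g_sigma_algebraType (@open T)] f.
Proof.
move=> cf; apply: (measurability _ (RGenOpens.measurableE R)).
move=> _ [_ [a [b ->]] <-]; rewrite setTI; apply: sub_sigma_algebra.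
exact: (continuousP _).1 cf _ (interval_open _ _).
Qed.

Lemma ae_forall_countable {d} {T : sigmaRingType d} {R : realType}
    {mu : {measure set T -> \bar R}} {I : Type} {D : set I}
    {P : I -> T -> Prop} :
  countable D -> (forall i, D i -> {ae mu, forall x, P i x}) ->
  {ae mu, forall x, forall i, D i -> P i x}.
Proof.
move=> /countable_injP[f f_inj] aeP.
have ae_n n : {ae mu, forall x, forall i, D i -> f i = n -> P i x}.
  have [[i [Di <-]]|no_i] := pselect (exists i, D i /\ f i = n).
    apply: filterS (aeP i Di) => x Pix j Dj fji.
    by rewrite (f_inj j i) ?inE.
  by apply: aeW => x i Di fin; exfalso; apply: no_i; exists i.
by apply: filterS (ae_foralln ae_n) => x Px i Di; exact: Px _ i Di erefl.
Qed.

Section probability.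
Context {d} {T : measurableType d} {R : realType} {mu : probability T R}.
Local Open Scope ereal_scope.

Lemma probability_ae_ex {P : T -> Prop} :
  {ae mu, forall x, P x} -> exists x, P x.
Proof.
have mu_gt0 : 0 < mu [set: T] by rewrite probability_setT.
exact: (filter_ex (FF := ae_properfilter_algebraOfSetsType mu_gt0)).
Qed.

Lemma integrable_affine {f : T -> R} (a b : R) :
  mu.-integrable setT (EFin \o f) ->
  mu.-integrable setT (fun x => (a * f x + b)%:E).
Proof.
move=> intf; under eq_fun do rewrite EFinD EFinM.
apply: integrableD => //; first exact: integrableZl.
exact: finite_measure_integrable_cst.
Qed.

Lemma integral_affine {f : T -> R} (a b : R) :
  mu.-integrable setT (EFin \o f) ->
  \int[mu]_x (a * f x + b)%:E = a%:E * \int[mu]_x (f x)%:E + b%:E.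
Proof.
move=> intf; under eq_integral do rewrite EFinD EFinM.
rewrite integralD //; first last.
- exact: finite_measure_integrable_cst.
- exact: integrableZl.
rewrite integralZl // integral_cst //; congr (_ + _).
by rewrite -[RHS]mule1; congr (_ * _); exact: probability_setT.
Qed.

Lemma ae_eq_cst_of_second_moment {f : T -> R} {c : R} :
  measurable_fun setT f -> mu.-integrable setT (fun x => (f x ^+ 2)%:E) ->
  \int[mu]_x (f x)%:E = c%:E -> \int[mu]_x (f x ^+ 2)%:E = (c ^+ 2)%:E ->
  {ae mu, forall x, f x = c}.
Proof.
move=> mf intf2 Ef Ef2.
have intf : mu.-integrable setT (EFin \o f).
  apply: le_integrable (integrable_affine 1 1 intf2) => //.
    exact/measurable_EFinP.
  move=> x _; rewrite /= lee_fin mul1r.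
  rewrite [X in (_ <= X)%R]ger0_norm ?addr_ge0 ?sqr_ge0 //.
  rewrite -real_normK ?num_real //.
  by have := sqr_ge0 (`|f x| - 1); have := normr_ge0 (f x); nra.
have sqE x : ((f x - c) ^+ 2)%:E =
    (f x ^+ 2)%:E + ((- (2 * c)) * f x + c ^+ 2)%:E.
  by rewrite -EFinD; congr EFin; ring.
have var0 : \int[mu]_x `|((f x - c) ^+ 2)%:E| = 0.
  under eq_integral do rewrite gee0_abs ?lee_fin ?sqr_ge0 // sqE.
  rewrite integralD // ?integrable_affine // integral_affine // Ef Ef2.
  by rewrite -EFinM -!EFinD; congr EFin; ring.
have mf2 : measurable_fun setT (fun x => ((f x - c) ^+ 2)%:E).
  by apply/measurable_EFinP/measurable_funX/measurable_funB.
apply: filterS ((ae_eq_integral_abs mu measurableT mf2).1 var0) => x.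
by move=> /(_ I) [] /eqP; rewrite sqrf_eq0 subr_eq0 => /eqP.
Qed.

End probability.

Section characters.
Context {R : realType} {Y : topologicalZmodType}.
Implicit Types (x : char_group R Y) (y : Y).

Lemma char_valP x : is_character (char_val x).
Proof. exact: set_valP x. Qed.

Lemma char_valD x a b : char_val x (a + b) = char_val x a * char_val x b.
Proof. by case: (char_valP x). Qed.

Lemma char_val_mulr2n x y : char_val x (y *+ 2) = char_val x y ^+ 2.
Proof. by rewrite mulr2n char_valD expr2. Qed.

Lemma norm_char_val x y : `|char_val x y| = 1.
Proof. by case: (char_valP x). Qed.

Lemma normr_Re_char_val_le1 x y : `|complex.Re (char_val x y)| <= 1.
Proof. by have := ler_norm_Re (char_val x y); rewrite norm_char_val. Qed.

Lemma continuous_char_val x : continuous (char_val x).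
Proof. by case: (char_valP x). Qed.

Lemma continuous_char_eval y :
  continuous (fun x : char_group R Y => char_val x y).
Proof.
move=> x; apply: (@continuous_comp _ _ _ set_val
  (fun f : {compact-open, Y -> R[i]} => f y)).
  exact: initial_continuous.
exact: continuous_compact_open_eval.
Qed.

Lemma continuous_Re_char_val x :
  continuous (fun y => complex.Re (char_val x y)).
Proof.
move=> y.
exact: (continuous_comp (continuous_char_val x y) (@continuous_Re R _)).
Qed.

Lemma continuous_Re_char_eval y :
  continuous (fun x : char_group R Y => complex.Re (char_val x y)).
Proof.
move=> x.
exact: (continuous_comp (continuous_char_eval y x) (@continuous_Re R _)).
Qed.

End characters.

Lemma ae_Re_char_val {R : realType} {Y : topologicalZmodType}
    {mu : probability (g_sigma_algebraType (@open (char_group R Y))) R}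
    {h : Y -> R} :
  (forall y, (\int[mu]_x (complex.Re (char_val x y))%:E = (h y)%:E)%E) ->
  (forall y, h (y *+ 2) = 2 * h y ^+ 2 - 1) ->
  forall y, {ae mu, forall x, complex.Re (char_val x y) = h y}.
Proof.
move=> Eh h_dup y.
have mRe z := continuous_borel_measurable (@continuous_Re_char_eval R Y z).
have intRe z :
    mu.-integrable setT (EFin \o (fun x => complex.Re (char_val x z))).
  apply: le_integrable (finite_measure_integrable_cst mu 1 measurableT) => //.
    exact/measurable_EFinP.
  by move=> x _; rewrite /= lee_fin normr1 normr_Re_char_val_le1.
have Re_sqr x : complex.Re (char_val x y) ^+ 2 =
    2^-1 * complex.Re (char_val x (y *+ 2)) + 2^-1.
  by rewrite char_val_mulr2n Re_sqr_unit ?norm_char_val //; field.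
apply: ae_eq_cst_of_second_moment (mRe y) _ (Eh y) _.
  by under eq_fun do rewrite Re_sqr; exact: integrable_affine (intRe _).
under eq_integral do rewrite Re_sqr.
by rewrite integral_affine // Eh h_dup -EFinM -EFinD; congr EFin; field.
Qed.

Theorem corollary4p3 (R : realType) (Y : topologicalZmodType)
    (Y_hausdorff : hausdorff_space Y)
    (Y_lc : locally_compact [set: Y])
    (Y_sc : @second_countable Y)
    (Y_conn : connected [set: Y])
    (h : Y -> R)
    (h_char : is_real_char_fun h)
    (h_dup : forall y : Y, h (y *+ 2) = 2 * h y ^+ 2 - 1) :
  exists x0 : char_group R Y, forall y : Y, h y = complex.Re (char_val x0 y).
Proof.
case: h_char => mu mu_h.
have ae_h := ae_Re_char_val (fun y => (mu_h y).1) h_dup.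
have [D cD dD] := second_countable_dense Y_sc.
have ae_D := ae_forall_countable cD (fun y _ => ae_h y).
have [x0 x0D] := probability_ae_ex ae_D.
exists x0 => y.
have [x1 [x1D <-]] :=
  probability_ae_ex (filterS2 _ (fun x xD xy => conj xD xy) ae_D (ae_h y)).
apply: (continuous_eq_dense dD (continuous_Re_char_val x1)
  (continuous_Re_char_val x0)) => z Dz.
by rewrite x1D // x0D.
Qed.
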